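(* Let $H$ be a complex Hilbert space, $A\in B(H)$ a nonzero positive semidefinite operator, and $T\in B_{A^{1/2}}(H)$. Let $T_b$ be the operator on $\mathbf{R}(A^{1/2})$ given by $T_b(A^{1/2}x)=A^{1/2}Tx$, $x\in H$. Then $$\|T_b\|_{\mathbf{R}(A^{1/2})}=\|(T^{\diamond})^{\diamond}\|=\|T^{\diamond}\|_A,$$ where $\|(T^\diamond)^\diamond\|$ is the usual operator norm on $H$.
   Context: $\|x\|_A=\langle Ax,x\rangle^{1/2}$. For $S\in B(H)$, $\|S\|_A=\sup\{\|Sx\|_A : x\in\overline{R(A)},\ \|x\|_A=1\}$. $B_{A^{1/2}}(H)=\{S\in B(H): R(S^*A^{1/2})\subset R(A^{1/2})\}$. For $S\in B_{A^{1/2}}(H)$, $S^{\diamond}$ is the unique operator in $B(H)$ with $S^*A^{1/2}=A^{1/2}S^{\diamond}$ and $R(S^{\diamond})\subset\overline{R(A^{1/2})}$; $S^\diamond\in B_{A^{1/2}}(H)$. $P$ is the orthogonal projection onto $\overline{R(A)}$, and $\mathbf{R}(A^{1/2})$ is the Hilbert space $R(A^{1/2})$ with inner product $(A^{1/2}x,A^{1/2}y)=\langle Px,Py\rangle$. *)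

From HB Require Import structures.
From mathcomp Require Import all_boot all_order all_algebra.
From mathcomp Require Import classical_sets boolp reals.
From mathcomp Require Import complex.
From Stdlib Require Import ClassicalEpsilon.
Set Implicit Arguments. Unset Strict Implicit. Unset Printing Implicit Defensive.
Import Order.TTheory GRing.Theory Num.Theory.
Local Open Scope ring_scope.
Local Open Scope classical_set_scope.

Section Hilbert.
Variables (R : realType) (H : lmodType R[i]) (ip : H -> H -> R[i]).

Definition hnorm (x : H) : R := Num.sqrt (@complex.Re R (ip x x)).

Definition is_hilbert : Prop :=
  [/\ (forall (a : R[i]) (x y z : H), ip (a *: x + y) z = a * ip x z + ip y z),
      (forall x y : H, ip y x = conjc (ip x y)),
      (forall x : H, 0 <= ip x x),
      (forall x : H, ip x x = 0 -> x = 0) &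
      (forall u : nat -> H,
         (forall e : R, 0 < e -> exists N : nat, forall m n : nat,
            (N <= m)%N -> (N <= n)%N -> hnorm (u m - u n) < e) ->
         exists l : H, forall e : R, 0 < e -> exists N : nat,
            forall n : nat, (N <= n)%N -> hnorm (u n - l) < e)].

Definition bounded_op (T : H -> H) : Prop :=
  (forall (a : R[i]) (x y : H), T (a *: x + y) = a *: T x + T y) /\
  exists M : R, forall x : H, hnorm (T x) <= M * hnorm x.

Definition positive_op (A : H -> H) : Prop :=
  bounded_op A /\ forall x : H, 0 <= ip (A x) x.

Definition opnorm (S : H -> H) : R :=
  sup [set hnorm (S x) | x in [set x : H | hnorm x <= 1]].

Definition adj (S : H -> H) : H -> H :=
  epsilon (inhabits S) (fun S' => bounded_op S' /\
    forall x y : H, ip (S x) y = ip x (S' y)).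

Definition sqrt_op (A : H -> H) : H -> H :=
  epsilon (inhabits A) (fun S => positive_op S /\ forall x, S (S x) = A x).

Definition hclosure (E : set H) : set H :=
  [set x | forall e : R, 0 < e -> exists2 y, E y & hnorm (x - y) < e].

Definition projR (A : H -> H) : H -> H :=
  epsilon (inhabits A) (fun P => bounded_op P /\ forall x : H,
    hclosure (range A) (P x) /\
    forall y, hclosure (range A) y -> ip (x - P x) y = 0).

Definition Anorm (A : H -> H) (x : H) : R := Num.sqrt (@complex.Re R (ip (A x) x)).

Definition Aopnorm (A S : H -> H) : R :=
  sup [set Anorm A (S x) | x in
        [set x | hclosure (range A) x /\ Anorm A x = 1]].

Definition in_BAhalf (A S : H -> H) : Prop :=
  bounded_op S /\
  forall x, exists y, adj S (sqrt_op A x) = sqrt_op A y.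

Definition diamond (A S : H -> H) : H -> H :=
  epsilon (inhabits S) (fun S' => bounded_op S' /\
    (forall x, adj S (sqrt_op A x) = sqrt_op A (S' x)) /\
    (forall x, hclosure (range (sqrt_op A)) (S' x))).

(* The Hilbert space R(A^{1/2}): a chosen preimage of u under A^{1/2} *)
Definition preimg (A : H -> H) (u : H) : H :=
  epsilon (inhabits u) (fun x => sqrt_op A x = u).

(* norm of R(A^{1/2}): ||A^{1/2} x||_R = ||P x|| (well defined) *)
Definition Rnorm (A : H -> H) (u : H) : R := hnorm (projR A (preimg A u)).

Definition Tb (A T : H -> H) (u : H) : H := sqrt_op A (T (preimg A u)).

Definition Tb_norm (A T : H -> H) : R :=
  sup [set Rnorm A (Tb A T u) | u in
        [set u | range (sqrt_op A) u /\ Rnorm A u <= 1]].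

End Hilbert.

(* Write S = A^{1/2} and P for the orthogonal projection onto the closure KA
   of R(A), which is also the closure of R(S).  Then S P = S and S is injective
   on KA.  The operator D = T^diamond satisfies S D = T^* S with D x in KA; it is
   built as D x = P y where S y = T^* S x, and it is bounded by the uniform
   boundedness principle applied to the family {S T w : ||S w|| <= 1}.  From
   D^* S = S T one reads off D^diamond = P T.
   Since ||S y||_R = ||P y|| and T_b (S y) = S T y, the norm of T_b is
   sup {||P T y|| : ||P y|| <= 1} = ||P T||, because P T P = P T.  Finally
   ||D||_A = sup {||T^* S x|| : x in KA, ||S x|| = 1} equals ||P T|| by duality:
   Re <P T x, S w> = Re <x, T^* S w>, and a vector u of KA has ||u|| <= c as
   soon as Re <u, S w> <= c ||S w|| for every w. *)
From HB Require Import structures.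
From mathcomp Require Import all_boot all_order all_algebra.
From mathcomp Require Import classical_sets boolp reals.
From mathcomp Require Import complex.
From mathcomp Require Import ring lra.
Import Order.TTheory GRing.Theory Num.Theory.
Local Open Scope ring_scope.
Set Implicit Arguments. Unset Strict Implicit. Unset Printing Implicit Defensive.

Section RealFieldFacts.
Variable R : realFieldType.

Lemma sqr_le_mul_of_quadratic_ge0 (a b c : R) : 0 <= c ->
  (forall t : R, 0 <= a + 2 * b * t + c * t ^+ 2) -> b ^+ 2 <= a * c.
Proof.
move=> c0 h; case: (ltrP 0 c) => cp.
  have := h (- b / c).
  have -> : a + 2 * b * (- b / c) + c * (- b / c) ^+ 2 = a - b ^+ 2 / c.
    by field; rewrite lt0r_neq0.
  by rewrite subr_ge0 ler_pdivrMr // mulrC.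
move: h; have -> : c = 0 by apply/le_anti/andP.
move=> h; rewrite mulr0; case: (eqVneq b 0) => [->|bn]; first by rewrite expr0n.
exfalso; have := h (- (a + 1) / (2 * b)); rewrite mul0r addr0.
have -> : 2 * b * (- (a + 1) / (2 * b)) = - (a + 1) by field.
lra.
Qed.

Lemma ler_of_sqr (a b : R) : 0 <= a -> 0 <= b -> a ^+ 2 <= b ^+ 2 -> a <= b.
Proof. by move=> a0 b0 h; rewrite -(ler_pXn2r (n:=2)) // ?nnegrE. Qed.

Lemma ltr_of_sqr (a b : R) : 0 <= a -> 0 <= b -> a ^+ 2 < b ^+ 2 -> a < b.
Proof. by move=> a0 b0 h; rewrite -(ltr_pXn2r (n:=2)) // ?nnegrE. Qed.

Lemma ler_norm_of_sqr (a b : R) : 0 <= b -> a ^+ 2 <= b ^+ 2 -> `|a| <= b.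
Proof. by move=> b0 h; apply: ler_of_sqr; rewrite ?real_normK ?num_real. Qed.

Lemma ler_of_sqr_le_mul (a c : R) : 0 <= a -> 0 <= c -> a ^+ 2 <= c * a -> a <= c.
Proof. move=> a0 c0 h; nra. Qed.

Lemma ler_of_small_eps (a b C : R) : 0 <= C ->
  (forall e, 0 < e -> e <= 1 -> a <= b + C * e) -> a <= b.
Proof.
move=> C0 h; apply/ler_addgt0Pr => e e0.
pose f := Num.min 1 (e / (C + 1)).
have f0 : 0 < f by rewrite lt_min ltr01 divr_gt0 //; lra.
have f1 : f <= 1 by rewrite ge_min lexx.
have fe : C * f <= e.
  have : f <= e / (C + 1) by rewrite ge_min lexx orbT.
  rewrite ler_pdivlMr; last lra.
  have : 0 <= C * f by rewrite mulr_ge0 // ltW.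
  nra.
by apply: le_trans (h f f0 f1) _; rewrite lerD2l.
Qed.

Lemma invr_exp2_le_invSn (n : nat) : (2 ^+ n : R)^-1 <= (n.+1%:R)^-1.
Proof.
rewrite lef_pV2 ?posrE ?exprn_gt0 ?ltr0Sn //.
elim: n => [|n ih]; first by rewrite expr0.
have : 1 <= (2 : R) ^+ n by rewrite exprn_ege1 // ler1n.
rewrite exprS -natr1; lra.
Qed.

Fixpoint half_sq_seq (n : nat) : R :=
  if n is n'.+1 then (1 + half_sq_seq n' ^+ 2) / 2 else 0.

Lemma half_sq_seq_bound n : 0 <= half_sq_seq n <= 1.
Proof.
elim: n => [|n /andP[h0 h1]] /=; first by rewrite lexx ler01.
apply/andP; split; first by apply: divr_ge0; rewrite ?addr_ge0 ?sqr_ge0.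
rewrite ler_pdivrMr //; nra.
Qed.

Lemma half_sq_seqS n : half_sq_seq n <= half_sq_seq n.+1.
Proof. by have /andP[h0 h1] := half_sq_seq_bound n; rewrite /= ler_pdivlMr //; nra. Qed.

Lemma half_sq_seq_mono n m : (n <= m)%N -> half_sq_seq n <= half_sq_seq m.
Proof.
elim: m => [|m ih]; first by rewrite leqn0 => /eqP ->.
rewrite leq_eqVlt => /orP[/eqP ->|]; first exact: lexx.
by rewrite ltnS => /ih h; apply: le_trans h (half_sq_seqS m).
Qed.

End RealFieldFacts.

Lemma invSn_lt_eventually (R : archiFieldType) (e : R) : 0 < e ->
  exists N : nat, forall n, (N <= n)%N -> (n.+1%:R)^-1 < e.
Proof.
move=> e0; have hb : e^-1 < (Num.Def.archi_bound e^-1)%:R.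
  by apply: archi_boundP; rewrite invr_ge0 ltW.
exists (Num.Def.archi_bound e^-1) => n hn.
rewrite -(invrK e) ltf_pV2 ?posrE ?invr_gt0 ?ltr0Sn //.
by apply: lt_le_trans hb _; rewrite ler_nat; exact: leqW.
Qed.

Section RealTypeFacts.
Variable R : realType.

Lemma sup_ub (E : set R) (M x : R) : (forall y, E y -> y <= M) -> E x -> x <= sup E.
Proof. by move=> hM Ex; apply: ub_le_sup => //; exists M. Qed.

Lemma sup_le (E : set R) (M : R) :
  (exists x, E x) -> (forall y, E y -> y <= M) -> sup E <= M.
Proof. by move=> [x Ex] hM; apply: ge_sup => //; exists x. Qed.

Lemma sup_adherent_bounded (E : set R) (M e : R) : (exists x, E x) ->
  (forall y, E y -> y <= M) -> 0 < e -> exists2 y, E y & sup E - e < y.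
Proof. by move=> [x Ex] hM e0; apply: sup_adherent => //; split; [exists x | exists M]. Qed.

Lemma inf_lb (E : set R) (M x : R) : (forall y, E y -> M <= y) -> E x -> inf E <= x.
Proof. by move=> hM Ex; apply: ge_inf => //; exists M. Qed.

Lemma inf_ge (E : set R) (M : R) :
  (exists x, E x) -> (forall y, E y -> M <= y) -> M <= inf E.
Proof. by move=> [x Ex] hM; apply: lb_le_inf => //; exists x. Qed.

Lemma inf_adherent_bounded (E : set R) (M e : R) : (exists x, E x) ->
  (forall y, E y -> M <= y) -> 0 < e -> exists2 y, E y & y < inf E + e.
Proof. by move=> [x Ex] hM e0; apply: inf_adherent => //; split; [exists x | exists M]. Qed.

Lemma half_sq_seq_cauchy e : 0 < e -> exists N, forall n m,
  (N <= n)%N -> (n <= m)%N -> half_sq_seq R m - half_sq_seq R n < e.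
Proof.
move=> e0; pose E : set R := range (half_sq_seq R).
have Eb y : E y -> y <= 1 by move=> [n _ <-]; have /andP[] := half_sq_seq_bound R n.
have [_ [N _ <-] hy] := sup_adherent_bounded (ex_intro _ 0 (ex_intro2 _ _ 0%N I erefl)) Eb e0.
exists N => n m hn hm.
have h1 : half_sq_seq R m <= sup E by apply: (sup_ub Eb); exists m.
have := half_sq_seq_mono R hn; lra.
Qed.

End RealTypeFacts.

Section ComplexParts.
Variable R : rcfType.

Lemma ReJ (z : R[i]) : complex.Re (conjc z) = complex.Re z.
Proof. by case: z. Qed.

Lemma ReD (z w : R[i]) : complex.Re (z + w) = complex.Re z + complex.Re w.
Proof. by case: z; case: w. Qed.

Lemma ImD (z w : R[i]) : complex.Im (z + w) = complex.Im z + complex.Im w.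
Proof. by case: z; case: w. Qed.

Lemma ReN (z : R[i]) : complex.Re (- z) = - complex.Re z.
Proof. by case: z. Qed.

Lemma ImN (z : R[i]) : complex.Im (- z) = - complex.Im z.
Proof. by case: z. Qed.

Lemma ReM (z w : R[i]) :
  complex.Re (z * w) = complex.Re z * complex.Re w - complex.Im z * complex.Im w.
Proof. by case: z; case: w. Qed.

Lemma ImM (z w : R[i]) :
  complex.Im (z * w) = complex.Re z * complex.Im w + complex.Im z * complex.Re w.
Proof. by case: z => a b; case: w => c d /=; lra. Qed.

Lemma normc_ge0 (a : R[i]) : 0 <= Normc.normc a.
Proof. by case: a => a b; exact: sqrtr_ge0. Qed.

End ComplexParts.

Section Hilbert.
Variables (R : realType) (H : lmodType R[i]) (ip : H -> H -> R[i]).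
Hypothesis hH : is_hilbert ip.

Local Notation hn := (hnorm ip).

Lemma ipL a x y z : ip (a *: x + y) z = a * ip x z + ip y z.
Proof. by case: hH => h _ _ _ _; apply: h. Qed.

Lemma ipC x y : ip y x = conjc (ip x y).
Proof. by case: hH => _ h _ _ _; apply: h. Qed.

Lemma ipxx_ge0 x : 0 <= ip x x.
Proof. by case: hH => _ _ h _ _; apply: h. Qed.

Lemma ipxx_eq0 x : ip x x = 0 -> x = 0.
Proof. by case: hH => _ _ _ h _; apply: h. Qed.

Lemma ip0l z : ip 0 z = 0.
Proof.
have := ipL 1 0 0 z; rewrite scale1r addr0 mul1r.
by move/(congr1 (fun t => t - ip 0 z)); rewrite subrr addrK => <-.
Qed.

Lemma ipDl x y z : ip (x + y) z = ip x z + ip y z.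
Proof. by rewrite -[x]scale1r ipL mul1r scale1r. Qed.

Lemma ipZl a x z : ip (a *: x) z = a * ip x z.
Proof. by rewrite -[a *: x]addr0 ipL ip0l addr0. Qed.

Lemma ipNl x z : ip (- x) z = - ip x z.
Proof. by rewrite -scaleN1r ipZl mulN1r. Qed.

Lemma ipBl x y z : ip (x - y) z = ip x z - ip y z.
Proof. by rewrite ipDl ipNl. Qed.

Lemma ip0r z : ip z 0 = 0.
Proof. by rewrite ipC ip0l conjc0. Qed.

Lemma ipDr x y z : ip z (x + y) = ip z x + ip z y.
Proof. by rewrite ipC ipDl rmorphD [ip z x]ipC [ip z y]ipC. Qed.

Lemma ipZr a x z : ip z (a *: x) = conjc a * ip z x.
Proof. by rewrite ipC ipZl rmorphM [ip z x]ipC. Qed.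

Lemma ipNr x z : ip z (- x) = - ip z x.
Proof. by rewrite ipC ipNl rmorphN [ip z x]ipC. Qed.

Lemma ipBr x y z : ip z (x - y) = ip z x - ip z y.
Proof. by rewrite ipDr ipNr. Qed.

Lemma ip_injr u v : (forall x, ip x u = ip x v) -> u = v.
Proof.
move=> h; apply/eqP; rewrite -subr_eq0; apply/eqP; apply: ipxx_eq0.
by rewrite ipBr h subrr.
Qed.

Lemma ip_injl u v : (forall z, ip u z = ip v z) -> u = v.
Proof. by move=> h; apply: ip_injr => z; rewrite ipC h -ipC. Qed.

Definition rip (x y : H) : R := complex.Re (ip x y).

Lemma ripC x y : rip x y = rip y x.
Proof. by rewrite /rip ipC ReJ. Qed.

Lemma ripDl x y z : rip (x + y) z = rip x z + rip y z.
Proof. by rewrite /rip ipDl ReD. Qed.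

Lemma ripDr x y z : rip z (x + y) = rip z x + rip z y.
Proof. by rewrite /rip ipDr ReD. Qed.

Lemma ripNl x z : rip (- x) z = - rip x z.
Proof. by rewrite /rip ipNl ReN. Qed.

Lemma ripNr x z : rip z (- x) = - rip z x.
Proof. by rewrite /rip ipNr ReN. Qed.

Lemma ripBl x y z : rip (x - y) z = rip x z - rip y z.
Proof. by rewrite ripDl ripNl. Qed.

Lemma ripBr x y z : rip z (x - y) = rip z x - rip z y.
Proof. by rewrite ripDr ripNr. Qed.

Lemma rip0l z : rip 0 z = 0.
Proof. by rewrite /rip ip0l. Qed.

Lemma rip0r z : rip z 0 = 0.
Proof. by rewrite /rip ip0r. Qed.

Lemma ripZl (r : R) x z : rip ((r%:C)%C *: x) z = r * rip x z.
Proof. by rewrite /rip ipZl ReM /= mul0r subr0. Qed.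

Lemma ripZr (r : R) x z : rip z ((r%:C)%C *: x) = r * rip z x.
Proof. by rewrite /rip ipZr ReM /= oppr0 mul0r subr0. Qed.

Lemma rip_iZr x z : rip z ('i%C *: x) = complex.Im (ip z x).
Proof. by rewrite /rip ipZr ReM /= mul0r mulN1r sub0r opprK. Qed.

Lemma rip_iZr_NiZl a b : rip a ('i%C *: b) = rip ((- 'i%C) *: a) b.
Proof. by rewrite rip_iZr /rip ipZl; case: (ip a b) => u v /=; ring. Qed.

Lemma ip_rip x y : ip x y = Complex (rip x y) (rip x ('i%C *: y)).
Proof. by rewrite rip_iZr /rip; case: (ip x y). Qed.

Lemma ripxx_ge0 x : 0 <= rip x x.
Proof. by have := ipxx_ge0 x; rewrite lecE => /andP[]. Qed.

Lemma Im_ipxx x : complex.Im (ip x x) = 0.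
Proof. by have := ipxx_ge0 x; rewrite lecE => /andP[/eqP ->]. Qed.

Lemma ripxx_eq0 x : rip x x = 0 -> x = 0.
Proof.
move=> h; apply: ipxx_eq0; move: h (Im_ipxx x); rewrite /rip.
by case: (ip x x) => a b /= -> ->.
Qed.

Lemma rip_eq0 v : (forall x, rip x v = 0) -> v = 0.
Proof. by move=> h; apply: ripxx_eq0; apply: h. Qed.

Lemma ripxx_DZ (x y : H) (t : R) :
  rip (x + (t%:C)%C *: y) (x + (t%:C)%C *: y) =
  rip x x + 2 * rip x y * t + rip y y * t ^+ 2.
Proof. by rewrite !ripDl !ripDr !ripZl !ripZr [rip y x]ripC; ring. Qed.

Lemma hnorm_ge0 x : 0 <= hn x.
Proof. exact: sqrtr_ge0. Qed.

Lemma hnorm_sqr x : hn x ^+ 2 = rip x x.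
Proof. by rewrite /hnorm sqr_sqrtr // ripxx_ge0. Qed.

Lemma hnorm_eq0 x : hn x = 0 -> x = 0.
Proof. by move=> h; apply: ripxx_eq0; rewrite -hnorm_sqr h expr0n. Qed.

Lemma hnorm_gt0 x : hn x != 0 -> 0 < hn x.
Proof. by move=> hx; rewrite lt_def hx hnorm_ge0. Qed.

Lemma hnorm0 : hn 0 = 0.
Proof. by rewrite /hnorm -/(rip 0 0) rip0l sqrtr0. Qed.

Lemma rip_sqr_le x y : rip x y ^+ 2 <= rip x x * rip y y.
Proof.
apply: sqr_le_mul_of_quadratic_ge0; first exact: ripxx_ge0.
by move=> t; rewrite -ripxx_DZ ripxx_ge0.
Qed.

Lemma normr_rip_le x y : `|rip x y| <= hn x * hn y.
Proof.
apply: ler_norm_of_sqr; first by rewrite mulr_ge0 ?hnorm_ge0.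
by rewrite exprMn !hnorm_sqr rip_sqr_le.
Qed.

Lemma rip_le x y : rip x y <= hn x * hn y.
Proof. exact: ler_normlW (normr_rip_le x y). Qed.

Lemma hnorm_sqrD x y : hn (x + y) ^+ 2 = hn x ^+ 2 + 2 * rip x y + hn y ^+ 2.
Proof. by rewrite !hnorm_sqr !ripDl !ripDr [rip y x]ripC; ring. Qed.

Lemma hnormD_le x y : hn (x + y) <= hn x + hn y.
Proof.
apply: ler_of_sqr; rewrite ?addr_ge0 ?hnorm_ge0 //.
rewrite hnorm_sqrD; have := rip_le x y; nra.
Qed.

Lemma hnormZ a x : hn (a *: x) = Normc.normc a * hn x.
Proof.
case: a => a b; rewrite /hnorm /= -sqrtrM ?addr_ge0 ?sqr_ge0 //.
congr Num.sqrt; rewrite ipZl ipZr mulrA ReM ImM -/(rip x x) Im_ipxx /=; ring.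
Qed.

Lemma hnormZr (r : R) x : hn ((r%:C)%C *: x) = `|r| * hn x.
Proof. by rewrite hnormZ /= expr0n addr0 sqrtr_sqr. Qed.

Lemma hnormN x : hn (- x) = hn x.
Proof. by rewrite -scaleN1r hnormZ /= oppr0 expr0n addr0 sqrrN expr1n sqrtr1 mul1r. Qed.

Lemma hnorm_distC x y : hn (x - y) = hn (y - x).
Proof. by rewrite -hnormN opprB. Qed.

Lemma hnorm_distD x y z : hn (x - z) <= hn (x - y) + hn (y - z).
Proof. by have := hnormD_le (x - y) (y - z); rewrite addrA subrK. Qed.

Lemma homogeneous_le (f g : H -> R) (c : R) :
  (forall (r : R) x, 0 < r -> f ((r%:C)%C *: x) = r * f x) ->
  (forall (r : R) x, 0 < r -> g ((r%:C)%C *: x) = r * g x) ->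
  (forall x, 0 <= g x) -> (forall x, g x = 0 -> f x <= 0) ->
  (forall x, g x = 1 -> f x <= c) -> forall x, f x <= c * g x.
Proof.
move=> fZ gZ g0 f0 hc x; case: (eqVneq (g x) 0) => [gx0|gxn0].
  by rewrite gx0 mulr0; exact: f0.
have gpos : 0 < g x by rewrite lt_def gxn0 g0.
have := hc (((g x)^-1)%:C%C *: x); rewrite fZ ?gZ ?invr_gt0 // mulVf // => /(_ erefl).
by rewrite ler_pdivrMl // mulrC.
Qed.

Definition conv (u : nat -> H) (l : H) :=
  forall e : R, 0 < e -> exists N : nat, forall n, (N <= n)%N -> hn (u n - l) < e.

Definition cauchy (u : nat -> H) :=
  forall e : R, 0 < e -> exists N : nat, forall m n : nat,
    (N <= m)%N -> (N <= n)%N -> hn (u m - u n) < e.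

Lemma cauchy_conv u : cauchy u -> exists l, conv u l.
Proof. by case: hH => _ _ _ _ h; apply: h. Qed.

Lemma conv_le u l :
  (forall e : R, 0 < e -> exists N : nat, forall n, (N <= n)%N -> hn (u n - l) <= e) ->
  conv u l.
Proof.
move=> h e e0; have e2 : 0 < e / 2 by rewrite divr_gt0.
have [N hN] := h _ e2; exists N => n /hN; lra.
Qed.

Lemma conv_unique u l l' : conv u l -> conv u l' -> l = l'.
Proof.
move=> h1 h2; apply/eqP; rewrite -subr_eq0; apply/eqP; apply: hnorm_eq0.
apply/eqP; rewrite eq_le hnorm_ge0 andbT.
apply/ler_addgt0Pr => e e0; rewrite add0r.
have e2 : 0 < e / 2 by rewrite divr_gt0.
have [N1 hN1] := h1 _ e2; have [N2 hN2] := h2 _ e2.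
have ha := hN1 (maxn N1 N2) (leq_maxl _ _).
have hb := hN2 (maxn N1 N2) (leq_maxr _ _).
rewrite hnorm_distC in ha; have := hnorm_distD l (u (maxn N1 N2)) l'; lra.
Qed.

Lemma conv_ext u v l : (forall n, u n = v n) -> conv u l -> conv v l.
Proof. by move=> huv h e e0; have [N hN] := h e e0; exists N => n /hN; rewrite huv. Qed.

Lemma conv_shift u l : conv u l -> conv (fun n => u n.+1) l.
Proof. by move=> h e e0; have [N hN] := h e e0; exists N => n Nn; apply/hN/leqW. Qed.

Lemma conv_const l : conv (fun _ => l) l.
Proof. by move=> e e0; exists 0%N => n _; rewrite subrr hnorm0. Qed.

Lemma hnorm_scale_small (a : R[i]) x (e : R) : 0 < e ->
  hn x < e / 2 / (Normc.normc a + 1) -> hn (a *: x) <= e / 2.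
Proof.
move=> e0 hx; have ca := normc_ge0 a.
rewrite hnormZ; apply: le_trans (_ : _ <= (Normc.normc a + 1) * (e / 2 / (Normc.normc a + 1))) _.
  by apply: ler_pM; rewrite ?hnorm_ge0 //; [lra | exact: ltW].
by rewrite mulrC divfK //; apply/lt0r_neq0; lra.
Qed.

Lemma conv_lin (a : R[i]) u v l l' : conv u l -> conv v l' ->
  conv (fun n => a *: u n + v n) (a *: l + l').
Proof.
move=> hu hv; apply: conv_le => e e0.
have ea : 0 < e / 2 / (Normc.normc a + 1).
  by rewrite !divr_gt0 // ltr_wpDl // normc_ge0.
have e2 : 0 < e / 2 by rewrite divr_gt0.
have [N1 hN1] := hu _ ea; have [N2 hN2] := hv _ e2.
exists (maxn N1 N2) => n Nn.
have h1 := hN1 n (leq_trans (leq_maxl _ _) Nn).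
have h2 := hN2 n (leq_trans (leq_maxr _ _) Nn).
have -> : a *: u n + v n - (a *: l + l') = a *: (u n - l) + (v n - l').
  by rewrite scalerBr opprD addrACA.
apply: le_trans (hnormD_le _ _) _; have := hnorm_scale_small e0 h1; lra.
Qed.

Lemma conv_add u v l l' : conv u l -> conv v l' -> conv (fun n => u n + v n) (l + l').
Proof.
by move=> hu hv; have := conv_lin 1 hu hv; rewrite scale1r; apply: conv_ext => n; rewrite scale1r.
Qed.

Lemma conv_scale (a : R[i]) u l : conv u l -> conv (fun n => a *: u n) (a *: l).
Proof.
by move=> h; have := conv_lin a h (conv_const 0); rewrite addr0; apply: conv_ext => n; rewrite addr0.
Qed.

Lemma conv_hnorm_le u l (c : R) : conv u l -> (forall n, hn (u n) <= c) -> hn l <= c.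
Proof.
move=> h hc; apply/ler_addgt0Pr => e e0; have [N hN] := h e e0.
have := hN N (leqnn _); have := hc N; have := hnorm_distD l (u N) 0.
by rewrite !subr0 hnorm_distC; lra.
Qed.

Lemma conv_rip u v l l' y z : conv u l -> conv v l' ->
  (forall n, rip (u n) y = rip z (v n)) -> rip l y = rip z l'.
Proof.
move=> hu hv h; apply/eqP; rewrite -subr_eq0 -normr_le0.
apply: (@ler_of_small_eps _ _ _ (hn y + hn z)); first by rewrite addr_ge0 ?hnorm_ge0.
move=> e e0 _; have [N1 hN1] := hu e e0; have [N2 hN2] := hv e e0.
pose n := maxn N1 N2.
have h1 := hN1 n (leq_maxl _ _); have h2 := hN2 n (leq_maxr _ _).
have -> : rip l y - rip z l' = rip (l - u n) y + rip z (v n - l').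
  by rewrite ripBl ripBr h; ring.
apply: le_trans (ler_normD _ _) _.
have := normr_rip_le (l - u n) y; have := normr_rip_le z (v n - l').
rewrite hnorm_distC in h1.
have := hnorm_ge0 y; have := hnorm_ge0 z; have := hnorm_ge0 (u n - l).
have := hnorm_ge0 (v n - l'); nra.
Qed.

Definition hclosed (K : set H) :=
  forall x, (forall e : R, 0 < e -> exists2 y, K y & hn (x - y) < e) -> K x.

Lemma hclosure_closed E : hclosed (hclosure ip E).
Proof.
move=> x hx e e0; have e20 : 0 < e / 2 by rewrite divr_gt0.
have [y hy hxy] := hx _ e20; have [z hz hyz] := hy _ e20.
by exists z => //; apply: le_lt_trans (hnorm_distD x y z) _; lra.
Qed.

Lemma sub_hclosure (E : set H) x : E x -> hclosure ip E x.
Proof. by move=> Ex e e0; exists x => //; rewrite subrr hnorm0. Qed.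

Lemma hclosure_mono (E F : set H) x :
  (forall y, E y -> F y) -> hclosure ip E x -> hclosure ip F x.
Proof. by move=> EF hx e e0; have [y /EF Fy h] := hx e e0; exists y. Qed.

Lemma hclosure_min (E F : set H) x :
  hclosed F -> (forall y, E y -> F y) -> hclosure ip E x -> F x.
Proof. by move=> cF EF hx; apply: cF; apply: hclosure_mono hx. Qed.

Lemma conv_closed (K : set H) u l : hclosed K -> (forall n, K (u n)) -> conv u l -> K l.
Proof.
move=> cK Ku ul; apply: cK => e e0; have [N hN] := ul e e0.
by exists (u N) => //; rewrite hnorm_distC; apply: hN.
Qed.

Definition linop (S : H -> H) := forall (a : R[i]) x y, S (a *: x + y) = a *: S x + S y.

Section LinearOperators.
Variable S : H -> H.
Hypothesis lS : linop S.

Lemma lin0 : S 0 = 0.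
Proof.
have := lS 1 0 0; rewrite scale1r addr0 scale1r.
by move/(congr1 (fun t => t - S 0)); rewrite subrr addrK => <-.
Qed.

Lemma linD x y : S (x + y) = S x + S y.
Proof. by have := lS 1 x y; rewrite !scale1r. Qed.

Lemma linZ a x : S (a *: x) = a *: S x.
Proof. by have := lS a x 0; rewrite lin0 !addr0. Qed.

Lemma linN x : S (- x) = - S x.
Proof. by rewrite -scaleN1r linZ scaleN1r. Qed.

Lemma linB x y : S (x - y) = S x - S y.
Proof. by rewrite linD linN. Qed.

End LinearOperators.

Lemma linop_sub S T : linop S -> linop T -> linop (fun x => S x - T x).
Proof. by move=> hS hT a x y; rewrite hS hT opprD addrACA -scalerBr. Qed.

Lemma linop_id : linop id.
Proof. by []. Qed.

Lemma linop_scale S (c : R[i]) : linop S -> linop (fun x => c *: S x).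
Proof. by move=> hS a x y; rewrite hS scalerDr !scalerA mulrC. Qed.

Lemma bounded_opP S : bounded_op ip S ->
  linop S /\ exists2 M, 0 <= M & forall x, hn (S x) <= M * hn x.
Proof.
case=> hl [M hM]; split => //; exists (Num.max M 0); first by rewrite le_max lexx orbT.
move=> x; apply: le_trans (hM x) _; apply: ler_wpM2r; first exact: hnorm_ge0.
by rewrite le_max lexx.
Qed.

(** * Orthogonal projections *)

Definition rsubspace (K : set H) :=
  [/\ K 0, (forall x y, K x -> K y -> K (x + y)) &
      (forall (r : R) x, K x -> K ((r%:C)%C *: x))].

Definition csubspace (K : set H) :=
  K 0 /\ forall (a : R[i]) x y, K x -> K y -> K (a *: x + y).

Lemma csubspace_rsubspace K : csubspace K -> rsubspace K.
Proof.
case=> K0 hK; split => //.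
- by move=> x y Kx Ky; rewrite -[x]scale1r; apply: hK.
- by move=> r x Kx; rewrite -[_ *: x]addr0; apply: hK.
Qed.

Lemma rsubspaceB K x y : rsubspace K -> K x -> K y -> K (x - y).
Proof.
case=> _ hD hZ Kx Ky; apply: hD => //; have := hZ (-1) y Ky.
by rewrite rmorphN rmorph1 scaleN1r.
Qed.

Section NearestPoint.
Variables (K : set H) (x : H).
Hypotheses (hK : rsubspace K) (cK : hclosed K).

Let dist2 : set R := fun r => exists2 y, K y & r = hn (x - y) ^+ 2.
Let d := inf dist2.

Let dist2_ge0 r : dist2 r -> 0 <= r.
Proof. by move=> [y _ ->]; rewrite sqr_ge0. Qed.

Let d_le y : K y -> d <= hn (x - y) ^+ 2.
Proof. by move=> Ky; apply: (inf_lb dist2_ge0); exists y. Qed.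

Let d_ge0 : 0 <= d.
Proof. by apply: inf_ge dist2_ge0; exists (hn (x - 0) ^+ 2); exists 0 => //; case: hK. Qed.

(* The parallelogram law applied to x - y_m and x - y_n, whose midpoint
   x - (y_m + y_n)/2 is at squared distance at least d. *)
Let minimizing_cauchy (y : nat -> H) :
  (forall n, K (y n) /\ hn (x - y n) ^+ 2 < d + (n.+1%:R)^-1) -> cauchy y.
Proof.
move=> hy; have [_ KD KZ] := hK.
have para m n : hn (y m - y n) ^+ 2 <= 2 * (m.+1%:R)^-1 + 2 * (n.+1%:R)^-1.
  have [Km hm] := hy m; have [Kn hn'] := hy n.
  have := d_le (KZ 2^-1 _ (KD _ _ Km Kn)).
  move: hm hn'; rewrite !hnorm_sqr.
  do 3 rewrite ?ripBl ?ripBr ?ripDl ?ripDr ?ripZl ?ripZr.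
  rewrite [rip (y m) x]ripC [rip (y n) x]ripC [rip (y n) (y m)]ripC.
  set s := (m.+1%:R)^-1; set t := (n.+1%:R)^-1; lra.
move=> e e0; have e20 : 0 < e ^+ 2 / 4 by rewrite divr_gt0 ?exprn_gt0.
have [N hN] := invSn_lt_eventually e20; exists N => m n hm hn'.
apply: ltr_of_sqr; [exact: hnorm_ge0 | exact: ltW |].
have := para m n; have := hN m hm; have := hN n hn'.
set s := (m.+1%:R)^-1; set t := (n.+1%:R)^-1; lra.
Qed.

Lemma nearest_point : exists2 p, K p & forall y, K y -> hn (x - p) ^+ 2 <= hn (x - y) ^+ 2.
Proof.
have dist2_0 : dist2 (hn (x - 0) ^+ 2) by exists 0 => //; case: hK.
have hseq n : exists z, K z /\ hn (x - z) ^+ 2 < d + (n.+1%:R)^-1.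
  have hp : 0 < (n.+1%:R : R)^-1 by rewrite invr_gt0 ltr0Sn.
  have [r [z Kz ->] hr] := inf_adherent_bounded (ex_intro _ _ dist2_0) dist2_ge0 hp.
  by exists z.
have [y hy] := choice hseq.
have [p hp] := cauchy_conv (minimizing_cauchy hy).
exists p; first exact: conv_closed cK (fun n => (hy n).1) hp.
move=> z Kz; apply: le_trans (d_le Kz).
have d0 := d_ge0; apply: (@ler_of_small_eps _ _ _ (2 * d + 6)); first lra.
move=> e e0 e1; have [N1 hN1] := hp e e0; have [N2 hN2] := invSn_lt_eventually e0.
pose n := maxn N1 N2.
have h1 := hN1 n (leq_maxl _ _); have h2 := hN2 n (leq_maxr _ _).
have [_ h3] := hy n; have h4 := hnorm_distD x (y n) p.
set a := hn (x - y n) in h3 h4; set b := hn (y n - p) in h1 h4.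
set c := hn (x - p) in h4 *.
have a0 : 0 <= a := hnorm_ge0 _; have c0 : 0 <= c := hnorm_ge0 _.
have b0 : 0 <= b := hnorm_ge0 _.
set s := (n.+1%:R)^-1 in h2 h3.
have hc : c ^+ 2 <= (a + e) ^+ 2 by apply: lerXn2r; rewrite ?nnegrE; lra.
have ha : a <= 2 + d by nra.
nra.
Qed.

End NearestPoint.

(* First-order condition: t |-> ||x - p - t y||^2 is minimal at t = 0. *)
Lemma nearest_point_orth (K : set H) x p : rsubspace K -> K p ->
  (forall y, K y -> hn (x - p) ^+ 2 <= hn (x - y) ^+ 2) ->
  forall y, K y -> rip (x - p) y = 0.
Proof.
move=> [_ KD KZ] Kp hp y Ky.
have hq (t : R) : 0 <= 0 + 2 * (- rip (x - p) y) * t + rip y y * t ^+ 2.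
  have := hp _ (KD _ _ Kp (KZ t _ Ky)).
  have -> : x - (p + (t%:C)%C *: y) = (x - p) + ((- t)%:C)%C *: y.
    by rewrite rmorphN scaleNr opprD addrA.
  rewrite !hnorm_sqr ripxx_DZ; set u := rip (x - p) y; nra.
have := sqr_le_mul_of_quadratic_ge0 (ripxx_ge0 y) hq; rewrite mul0r sqrrN => h.
by apply/eqP; rewrite -sqrf_eq0 eq_le h sqr_ge0.
Qed.

Lemma rsubspace_proj (K : set H) x : rsubspace K -> hclosed K ->
  exists2 p, K p & forall y, K y -> rip (x - p) y = 0.
Proof.
move=> hK cK; have [p Kp hp] := nearest_point x hK cK.
by exists p => //; apply: nearest_point_orth.
Qed.

Lemma hnorm_le_of_orth x p : rip (x - p) p = 0 -> hn p <= hn x.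
Proof.
move=> hp; apply: ler_of_sqr_le_mul; rewrite ?hnorm_ge0 //.
by move/eqP: hp; rewrite ripBl subr_eq0 hnorm_sqr => /eqP <-; exact: rip_le.
Qed.

Lemma csubspace_proj_unique (K : set H) x p q : csubspace K -> K p -> K q ->
  (forall y, K y -> ip (x - p) y = 0) -> (forall y, K y -> ip (x - q) y = 0) -> p = q.
Proof.
move=> hK Kp Kq hp hq; apply/eqP; rewrite eq_sym -subr_eq0; apply/eqP; apply: ipxx_eq0.
have Kqp : K (q - p) by apply: rsubspaceB => //; apply: csubspace_rsubspace.
have e : q - p = (x - p) - (x - q) by rewrite opprB [RHS]addrC addrA subrK.
by rewrite {1}e ipBl hp ?hq // subrr.
Qed.

Lemma csubspace_proj (K : set H) : csubspace K -> hclosed K ->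
  exists P, bounded_op ip P /\
    forall x, K (P x) /\ forall y, K y -> ip (x - P x) y = 0.
Proof.
move=> hK cK.
have hex x : exists p, K p /\ forall y, K y -> ip (x - p) y = 0.
  have [p Kp hp] := rsubspace_proj x (csubspace_rsubspace hK) cK.
  exists p; split => // y Ky.
  have Kiy : K ('i%C *: y) by case: hK => K0 hK; rewrite -[_ *: y]addr0; apply: hK.
  by rewrite ip_rip !hp.
have [P hP] := choice hex.
have lP : linop P.
  move=> a x y; have [Kx hx] := hP x; have [Ky hy] := hP y.
  have [Kxy hxy] := hP (a *: x + y).
  apply: (csubspace_proj_unique hK Kxy _ hxy); first by case: hK => _; apply.
  move=> z Kz; have -> : a *: x + y - (a *: P x + P y) = a *: (x - P x) + (y - P y).
    by rewrite scalerBr opprD addrACA.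
  by rewrite ipL hx // hy // mulr0 addr0.
exists P; split => //; split => //; exists 1 => x; rewrite mul1r.
have [Kx hx] := hP x; apply: hnorm_le_of_orth.
by rewrite /rip hx.
Qed.

Lemma hclosure_csubspace E : csubspace E -> csubspace (hclosure ip E).
Proof.
case=> E0 hE; split; first exact: sub_hclosure.
move=> a x y hx hy e e0.
have ea : 0 < e / 2 / (Normc.normc a + 1) by rewrite !divr_gt0 // ltr_wpDl // normc_ge0.
have e2 : 0 < e / 2 by rewrite divr_gt0.
have [x' Ex' hx'] := hx _ ea; have [y' Ey' hy'] := hy _ e2.
exists (a *: x' + y'); first exact: hE.
have -> : a *: x + y - (a *: x' + y') = a *: (x - x') + (y - y').
  by rewrite scalerBr opprD addrACA.
apply: le_lt_trans (hnormD_le _ _) _; have := hnorm_scale_small e0 hx'; lra.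
Qed.

Lemma range_csubspace S : linop S -> csubspace (range S).
Proof.
move=> lS; split; first by exists 0; rewrite ?lin0.
by move=> a x y [u _ <-] [v _ <-]; exists (a *: u + v) => //; rewrite lS.
Qed.

Lemma projR_spec (A : H -> H) : linop A ->
  bounded_op ip (projR ip A) /\ forall x, hclosure ip (range A) (projR ip A x) /\
    forall y, hclosure ip (range A) y -> ip (x - projR ip A x) y = 0.
Proof.
move=> lA; have [P hP] := csubspace_proj (hclosure_csubspace (range_csubspace lA))
  (@hclosure_closed _).
exact: (ClassicalEpsilon.epsilon_spec (inhabits A) (fun Q => bounded_op ip Q /\ forall x,
  hclosure ip (range A) (Q x) /\ forall y, hclosure ip (range A) y -> ip (x - Q x) y = 0)
  (ex_intro _ P hP)).
Qed.

(** * Riesz representation and adjoints *)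

Lemma riesz_rip (g : H -> R) : (forall x y, g (x + y) = g x + g y) ->
  (forall (r : R) x, g ((r%:C)%C *: x) = r * g x) ->
  (exists M, forall x, `|g x| <= M * hn x) -> exists z, forall x, g x = rip x z.
Proof.
move=> gD gZ [M hM].
have g0 : g 0 = 0 by have := gZ 0 0; rewrite mul0r scaler0.
have gB x y : g (x - y) = g x - g y.
  have := gZ (-1) y; rewrite mulN1r rmorphN rmorph1 scaleN1r => <-; exact: gD.
pose K : set H := fun x => g x = 0.
have rK : rsubspace K.
  split; [exact: g0 | by move=> x y; rewrite /K gD => -> ->; rewrite addr0 |].
  by move=> r x; rewrite /K gZ => ->; rewrite mulr0.
have cK : hclosed K.
  move=> x hx; rewrite /K; apply/eqP; rewrite -normr_le0.
  apply: (@ler_of_small_eps _ _ _ `|M|) => // e e0 _.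
  have [y Ky hy] := hx e e0.
  rewrite -[x](subrK y) gD Ky addr0 add0r; apply: le_trans (hM _) _.
  apply: (@le_trans _ _ (`|M| * hn (x - y))).
    by apply: ler_wpM2r; [exact: hnorm_ge0 | exact: ler_norm].
  by apply: ler_wpM2l; [exact: normr_ge0 | exact: ltW].
case: (pselect (forall u, g u = 0)) => [g00|/existsNP [u gu]].
  by exists 0 => x; rewrite g00 rip0r.
(* w = u - p is orthogonal to ker g, and x - (g x / g w) w lies in ker g. *)
have [p Kp hp] := rsubspace_proj u rK cK.
pose w := u - p.
have gw : g w != 0 by rewrite /w gB Kp subr0; apply/eqP.
have rw : rip w w != 0 by apply: contra gw => /eqP/ripxx_eq0 ->; rewrite g0.
exists (((g w / rip w w)%:C)%C *: w) => x; rewrite ripZr.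
have Kv : K (x - ((g x / g w)%:C)%C *: w) by rewrite /K gB gZ divfK // subrr.
have := hp _ Kv; rewrite -/w ripC ripBl ripZl => /eqP; rewrite subr_eq0 => /eqP ->.
by field; apply/andP.
Qed.

Lemma adj_exists S : bounded_op ip S ->
  exists S', bounded_op ip S' /\ forall x y, ip (S x) y = ip x (S' y).
Proof.
move=> /bounded_opP [lS [M M0 hM]].
have hz y : exists z, forall x, rip (S x) y = rip x z.
  apply: riesz_rip.
  - by move=> a b; rewrite linD // ripDl.
  - by move=> r a; rewrite linZ // ripZl.
  - exists (M * hn y) => x; apply: le_trans (normr_rip_le _ _) _.
    by rewrite mulrAC; apply: ler_wpM2r; [exact: hnorm_ge0 | exact: hM].
have [Z hZ] := choice hz.
have hip x y : ip (S x) y = ip x (Z y).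
  by rewrite ip_rip [ip x _]ip_rip hZ rip_iZr_NiZl -linZ // hZ -rip_iZr_NiZl.
exists Z; split => //; split.
  move=> a y y'; apply: ip_injr => x.
  by rewrite -hip ipDr ipZr ipDr ipZr -!hip.
exists M => y; apply: ler_of_sqr_le_mul; rewrite ?mulr_ge0 ?hnorm_ge0 //.
rewrite hnorm_sqr -hZ; apply: le_trans (rip_le _ _) _.
by rewrite mulrAC; apply: ler_wpM2r; [exact: hnorm_ge0 | exact: hM].
Qed.

Lemma adj_spec S : bounded_op ip S ->
  bounded_op ip (adj ip S) /\ forall x y, ip (S x) y = ip x (adj ip S y).
Proof.
move=> hS; have [Z hZ] := adj_exists hS.
exact: (ClassicalEpsilon.epsilon_spec (inhabits S)
  (fun S' => bounded_op ip S' /\ forall x y, ip (S x) y = ip x (S' y)) (ex_intro _ Z hZ)).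
Qed.

(** * Positive operators and their square roots *)

Section PositiveOperator.
Variable A : H -> H.
Hypothesis hA : positive_op ip A.

Let lA : linop A := hA.1.1.

Lemma pos_Im_ip u : complex.Im (ip (A u) u) = 0.
Proof. by case: hA => _ h; have := h u; rewrite lecE => /andP[/eqP ->]. Qed.

Lemma pos_rip_ge0 u : 0 <= rip (A u) u.
Proof. by case: hA => _ h; have := h u; rewrite lecE => /andP[]. Qed.

(* Polarization: Im <A z, z> = 0 for z = x + y and z = x + i y. *)
Lemma pos_selfadj x y : ip (A x) y = ip x (A y).
Proof.
have h1 := pos_Im_ip (x + y); have h2 := pos_Im_ip (x + 'i%C *: y).
rewrite linD // !ipDl !ipDr !ImD pos_Im_ip pos_Im_ip in h1.
rewrite linD // !ipDl !ipDr !ImD pos_Im_ip pos_Im_ip in h2.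
rewrite ipZr linZ // ipZl !ImM /= in h2.
rewrite [ip x (A y)]ipC; move: h1 h2.
case: (ip (A x) y) => a b; case: (ip (A y) x) => c d /= h1 h2.
by apply/eqP; rewrite eq_complex /=; apply/andP; split; apply/eqP; lra.
Qed.

Lemma pos_selfadj_rip x y : rip (A x) y = rip x (A y).
Proof. by rewrite /rip pos_selfadj. Qed.

Lemma pos_rip_sqr_le u v : rip (A u) v ^+ 2 <= rip (A u) u * rip (A v) v.
Proof.
apply: sqr_le_mul_of_quadratic_ge0; first exact: pos_rip_ge0.
move=> t; have := pos_rip_ge0 (u + (t%:C)%C *: v).
rewrite linD // linZ // !ripDl !ripDr !ripZl !ripZr.
rewrite [rip (A v) u]pos_selfadj_rip [rip v (A u)]ripC; nra.
Qed.

Lemma pos_hnorm_sqr_le M : 0 <= M ->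
  (forall x, hn (A x) <= M * hn x) -> forall x, hn (A x) ^+ 2 <= M * rip (A x) x.
Proof.
move=> M0 hM x; have q0 := pos_rip_ge0 x.
case: (eqVneq (hn (A x)) 0) => [->|hne]; first by rewrite expr0n mulr_ge0.
have hpos : 0 < hn (A x) ^+ 2 by rewrite exprn_gt0 // hnorm_gt0.
have h1 : rip (A (A x)) (A x) <= M * hn (A x) ^+ 2.
  apply: le_trans (rip_le _ _) _; rewrite expr2 mulrA.
  by apply: ler_wpM2r; [exact: hnorm_ge0 | exact: hM].
have h2 : hn (A x) ^+ 2 * hn (A x) ^+ 2 <= rip (A x) x * (M * hn (A x) ^+ 2).
  rewrite -expr2 {1}hnorm_sqr; apply: le_trans (pos_rip_sqr_le x (A x)) _.
  exact: ler_wpM2l.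
by rewrite -(ler_pM2r hpos); move: h2; set z := hn (A x) ^+ 2; nra.
Qed.

End PositiveOperator.

(* The limit X of this iteration satisfies X = (B + X^2)/2, i.e.
   (I - X)^2 = I - B; it converges because ||X_n|| <= a_n, where
   a_{n+1} = (1 + a_n^2)/2 increases to 1. *)
Section SqrtIteration.
Variable B : H -> H.
Hypotheses (lB : linop B) (sB : forall x y, ip (B x) y = ip x (B y))
  (nB : forall x, hn (B x) <= hn x).

Fixpoint sqrt_iter (n : nat) (x : H) : H :=
  if n is n'.+1 then ((2^-1 : R)%:C)%C *: (B x + sqrt_iter n' (sqrt_iter n' x)) else 0.

Lemma sqrt_iter_linop n : linop (sqrt_iter n).
Proof.
elim: n => [|n ih] a x y /=; first by rewrite scaler0 addr0.
by rewrite lB ih ih addrACA -[a *: B x + _]scalerDr [LHS]scalerDr !scalerA [a * _]mulrC.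
Qed.

Lemma sqrt_iter_selfadj n x y : ip (sqrt_iter n x) y = ip x (sqrt_iter n y).
Proof.
elim: n x y => [|n ih] x y /=; first by rewrite ip0l ip0r.
by rewrite ipZl ipZr conjc_real ipDl ipDr sB ih ih.
Qed.

Lemma sqrt_iter_bound n x : hn (sqrt_iter n x) <= half_sq_seq R n * hn x.
Proof.
elim: n x => [|n ih] x /=; first by rewrite hnorm0 mul0r.
rewrite hnormZr ger0_norm ?invr_ge0 ?ler0n //.
have h1 := nB x; have h2 := ih (sqrt_iter n x); have h3 := ih x.
have h4 := hnormD_le (B x) (sqrt_iter n (sqrt_iter n x)).
have /andP[a0 a1] := half_sq_seq_bound R n.
have : half_sq_seq R n * hn (sqrt_iter n x) <= half_sq_seq R n * (half_sq_seq R n * hn x).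
  exact: ler_wpM2l.
have := hnorm_ge0 x; nra.
Qed.

Lemma sqrt_iter_dist n m x : (n <= m)%N ->
  hn (sqrt_iter m x - sqrt_iter n x) <= (half_sq_seq R m - half_sq_seq R n) * hn x.
Proof.
elim: n m x => [|n ih] m x hnm; first by rewrite /= !subr0; apply: sqrt_iter_bound.
case: m hnm => [//|m] /= hnm.
rewrite -scalerBr hnormZr ger0_norm ?invr_ge0 ?ler0n //.
have -> : B x + sqrt_iter m (sqrt_iter m x) - (B x + sqrt_iter n (sqrt_iter n x)) =
    sqrt_iter m (sqrt_iter m x - sqrt_iter n x) +
    (sqrt_iter m (sqrt_iter n x) - sqrt_iter n (sqrt_iter n x)).
  by rewrite (linB (sqrt_iter_linop m)) opprD addrA [B x + _]addrC addrK addrA subrK.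
have h1 := hnormD_le (sqrt_iter m (sqrt_iter m x - sqrt_iter n x))
  (sqrt_iter m (sqrt_iter n x) - sqrt_iter n (sqrt_iter n x)).
have h2 := sqrt_iter_bound m (sqrt_iter m x - sqrt_iter n x).
have h3 := ih m x hnm; have h4 := ih m (sqrt_iter n x) hnm.
have h5 := sqrt_iter_bound n x.
have /andP[am0 am1] := half_sq_seq_bound R m.
have /andP[an0 an1] := half_sq_seq_bound R n.
have hmn := @half_sq_seq_mono R n m hnm.
set a := half_sq_seq R m in am0 am1 hmn h2 h3 h4 *.
set b := half_sq_seq R n in an0 an1 hmn h3 h4 h5 *.
have h6 : a * hn (sqrt_iter m x - sqrt_iter n x) <= a * ((a - b) * hn x).
  exact: ler_wpM2l.
have h7 : (a - b) * hn (sqrt_iter n x) <= (a - b) * (b * hn x).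
  by apply: ler_wpM2l; rewrite // subr_ge0.
have := hnorm_ge0 x; nra.
Qed.

Lemma sqrt_iter_cauchy x : cauchy (fun n => sqrt_iter n x).
Proof.
move=> e e0; have ex : 0 < e / (hn x + 1) by rewrite divr_gt0 // ltr_wpDl ?hnorm_ge0.
have [N hN] := half_sq_seq_cauchy ex; exists N.
suff key p q : (N <= p)%N -> (p <= q)%N -> hn (sqrt_iter q x - sqrt_iter p x) < e.
  move=> m n hm hn'; case: (leqP n m) => h; first exact: key.
  by rewrite hnorm_distC; apply: key => //; exact: ltnW.
move=> hp hpq; apply: le_lt_trans (sqrt_iter_dist x hpq) _.
have := hN p q hp hpq; have := hnorm_ge0 x => hx0 hlt.
apply: (@le_lt_trans _ _ (e / (hn x + 1) * hn x)).
  by apply: ler_wpM2r => //; exact: ltW.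
rewrite mulrAC ltr_pdivrMr ?ltr_wpDl ?hnorm_ge0 //; nra.
Qed.

Section Limit.
Variable X : H -> H.
Hypothesis hX : forall x, conv (fun n => sqrt_iter n x) (X x).

Lemma sqrt_iter_lim_linop : linop X.
Proof.
move=> a x y; apply: conv_unique (hX (a *: x + y)) _.
apply: (conv_ext (u := fun n => a *: sqrt_iter n x + sqrt_iter n y)).
  by move=> n; rewrite sqrt_iter_linop.
exact: conv_lin (hX x) (hX y).
Qed.

Lemma sqrt_iter_lim_bound x : hn (X x) <= hn x.
Proof.
apply: (conv_hnorm_le (hX x)) => n; apply: le_trans (sqrt_iter_bound n x) _.
by have /andP[_ a1] := half_sq_seq_bound R n; rewrite ler_piMl ?hnorm_ge0.
Qed.

Lemma sqrt_iter_lim_selfadj x y : ip (X x) y = ip x (X y).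
Proof.
rewrite ip_rip [ip x _]ip_rip.
have -> : rip (X x) y = rip x (X y).
  by apply: (conv_rip (hX x) (hX y)) => n; rewrite /rip sqrt_iter_selfadj.
have -> // : rip (X x) ('i%C *: y) = rip x ('i%C *: X y).
apply: (conv_rip (hX x) (u := fun n => sqrt_iter n x) (conv_scale 'i%C (hX y))).
by move=> n; rewrite /rip sqrt_iter_selfadj (linZ (sqrt_iter_linop n)).
Qed.

Lemma sqrt_iter_lim_fixpoint x : X x = ((2^-1 : R)%:C)%C *: (B x + X (X x)).
Proof.
apply: conv_unique (conv_shift (hX x)) _ => /=.
apply: conv_scale; apply: conv_add; first exact: conv_const.
apply: conv_le => e e0; have e2 : 0 < e / 2 by rewrite divr_gt0.
have [N1 hN1] := hX x e2; have [N2 hN2] := hX (X x) e2.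
exists (maxn N1 N2) => n Nn.
have h1 := hN1 n (leq_trans (leq_maxl _ _) Nn).
have h2 := hN2 n (leq_trans (leq_maxr _ _) Nn).
have -> : sqrt_iter n (sqrt_iter n x) - X (X x) =
    sqrt_iter n (sqrt_iter n x - X x) + (sqrt_iter n (X x) - X (X x)).
  by rewrite (linB (sqrt_iter_linop n)) addrA subrK.
apply: le_trans (hnormD_le _ _) _.
have h3 := sqrt_iter_bound n (sqrt_iter n x - X x).
have /andP[a0 a1] := half_sq_seq_bound R n.
have : half_sq_seq R n * hn (sqrt_iter n x - X x) <= hn (sqrt_iter n x - X x).
  by rewrite ler_piMl ?hnorm_ge0.
lra.
Qed.

End Limit.

Lemma half_sqr_fixpoint : exists X, [/\ linop X, (forall x y, ip (X x) y = ip x (X y)),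
  (forall x, hn (X x) <= hn x) &
  (forall x, X x = ((2^-1 : R)%:C)%C *: (B x + X (X x)))].
Proof.
have [X hX] := choice (fun x => cauchy_conv (sqrt_iter_cauchy x)).
exists X; split.
- exact: sqrt_iter_lim_linop.
- exact: sqrt_iter_lim_selfadj.
- exact: sqrt_iter_lim_bound.
- exact: sqrt_iter_lim_fixpoint.
Qed.

End SqrtIteration.

Lemma pos_contraction A : positive_op ip A ->
  exists2 m : R, 0 < m & forall x, hn (x - ((m^-1)%:C)%C *: A x) <= hn x.
Proof.
move=> hA; have [lA [M M0 hM]] := bounded_opP hA.1.
exists (M + 1) => [|x]; first lra.
apply: ler_of_sqr; rewrite ?hnorm_ge0 //.
rewrite -scaleNr -rmorphN !hnorm_sqr ripxx_DZ -[rip (A x) (A x)]hnorm_sqr [rip x (A x)]ripC.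
have hq := pos_rip_ge0 hA x; have hb := pos_hnorm_sqr_le hA M0 hM x.
set q := rip (A x) x in hq hb *; set u := (M + 1)^-1.
have u0 : 0 < u by rewrite invr_gt0; lra.
have uM : u * M <= 1 by rewrite ler_pdivrMl; lra.
have : u ^+ 2 * hn (A x) ^+ 2 <= u ^+ 2 * (M * q) by apply: ler_wpM2l; rewrite ?sqr_ge0.
have : u ^+ 2 * (M * q) <= u * q.
  have -> : u ^+ 2 * (M * q) = (u * M) * (u * q) by ring.
  by rewrite ler_piMl // mulr_ge0 // ltW.
have : 0 <= u * q by rewrite mulr_ge0 // ltW.
rewrite sqrrN; nra.
Qed.

Lemma sub_contraction_ge0 X : (forall x y, ip (X x) y = ip x (X y)) ->
  (forall x, hn (X x) <= hn x) -> forall x, 0 <= ip (x - X x) x.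
Proof.
move=> sX nX x; have hIm : complex.Im (ip (X x) x) = 0.
  by have := sX x x; rewrite [ip x (X x)]ipC; case: (ip (X x) x) => a b [] /=; lra.
rewrite ipBl lecE /= ImD ImN Im_ipxx hIm subrr eqxx /= ReD ReN subr_ge0.
rewrite -/(rip x x) -/(rip (X x) x); apply: le_trans (rip_le _ _) _.
by rewrite -hnorm_sqr expr2; apply: ler_wpM2r; [exact: hnorm_ge0 | exact: nX].
Qed.

(* With B = I - A/m, the square root is sqrt(m) (I - X) for X = (B + X^2)/2. *)
Lemma sqrt_exists A : positive_op ip A ->
  exists S, positive_op ip S /\ forall x, S (S x) = A x.
Proof.
move=> hA; have lA : linop A := hA.1.1.
have [m m0 nB] := pos_contraction hA.
pose c : R[i] := ((m^-1)%:C)%C; pose B x := x - c *: A x.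
have lB : linop B := linop_sub linop_id (linop_scale c lA).
have sB x y : ip (B x) y = ip x (B y).
  by rewrite /B ipBl ipBr ipZl ipZr conjc_real pos_selfadj.
have [X [lX sX nX fX]] := half_sqr_fixpoint lB sB nB.
pose sq : R[i] := ((Num.sqrt m)%:C)%C; pose S x := sq *: (x - X x).
have lS : linop S := linop_scale sq (linop_sub linop_id lX).
exists S; split; first split.
- split => //; exists (Num.sqrt m * 2) => x.
  rewrite /S hnormZ /= expr0n addr0 sqrtr_sqr ger0_norm ?sqrtr_ge0 // -mulrA.
  apply: ler_wpM2l; first exact: sqrtr_ge0.
  by have := hnormD_le x (- X x); rewrite hnormN; have := nX x; lra.
- by move=> x; rewrite /S ipZl mulr_ge0 ?lecR ?sqrtr_ge0 ?sub_contraction_ge0.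
move=> x; apply: ip_injl => z.
have hXX : X (X x) = ((2 : R)%:C)%C *: X x - B x.
  rewrite [in RHS](fX x) scalerA -rmorphM mulfV ?pnatr_eq0 // rmorph1 scale1r.
  by rewrite addrC addKr.
rewrite /S (linZ lX) (linB lX) hXX /B !(ipZl, ipBl).
have hs : sq * sq * c = 1.
  by rewrite /sq /c -!rmorphM -expr2 sqr_sqrtr ?ltW // mulfV ?lt0r_neq0 // rmorph1.
set a := ip x z; set b := ip (X x) z; set d := ip (A x) z.
by transitivity (sq * sq * c * d); [ring | rewrite hs mul1r].
Qed.

Lemma sqrt_spec A : positive_op ip A ->
  positive_op ip (sqrt_op ip A) /\ forall x, sqrt_op ip A (sqrt_op ip A x) = A x.
Proof.
move=> hA; have [S hS] := sqrt_exists hA.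
exact: (ClassicalEpsilon.epsilon_spec (inhabits A)
  (fun S => positive_op ip S /\ forall x, S (S x) = A x) (ex_intro _ S hS)).
Qed.

(** * Baire category and uniform boundedness *)

Section Baire.
Variable F : nat -> set H.
Hypothesis cF : forall k, hclosed (F k).
Hypothesis no_ball : forall k x (r : R), 0 < r -> ~ (forall y, hn (y - x) < r -> F k y).

Let avoiding_ball k x (r : R) : 0 < r -> exists q : H * R,
  [/\ 0 < q.2, q.2 <= r / 2, hn (q.1 - x) + q.2 < r &
      forall z, hn (z - q.1) <= q.2 -> ~ F k z].
Proof.
move=> r0; have r2 : 0 < r / 2 by rewrite divr_gt0.
have [y [hy nFy]] : exists y, hn (y - x) < r / 2 /\ ~ F k y.
  apply/not_existsP => hc; apply: (@no_ball k x (r / 2) r2) => y hy.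
  by apply: contrapT => nF; exact: (hc y (conj hy nF)).
have [rho [rho0 hrho]] : exists rho : R, 0 < rho /\ forall z, F k z -> rho <= hn (y - z).
  apply/not_existsP => hc; apply: nFy; apply: cF => e e0.
  apply: contrapT => hc2; apply: (hc e); split => // z Fz.
  by rewrite leNgt; apply/negP => hlt; apply: hc2; exists z.
pose r' := Num.min (rho / 2) (r / 4).
have r'0 : 0 < r' by rewrite lt_min !divr_gt0.
have r'1 : r' <= rho / 2 by rewrite ge_min lexx.
have r'2 : r' <= r / 4 by rewrite ge_min lexx orbT.
exists (y, r'); split => /=; [by [] | lra | lra |].
by move=> z hz Fz; have := hrho z Fz; rewrite hnorm_distC; lra.
Qed.

(* The centers of nested closed balls, the k-th avoiding F k, converge to a
   point that lies in none of the F k. *)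
Lemma not_covered : exists x, forall k, ~ F k x.
Proof.
have hstep (kp : nat * (H * R)) : exists q : H * R, 0 < kp.2.2 ->
    [/\ 0 < q.2, q.2 <= kp.2.2 / 2, hn (q.1 - kp.2.1) + q.2 < kp.2.2 &
        forall z, hn (z - q.1) <= q.2 -> ~ F kp.1 z].
  case: (ltrP 0 kp.2.2) => [/(avoiding_ball kp.1 kp.2.1)[q hq]|hr]; first by exists q.
  by exists kp.2 => h; exfalso; lra.
have [step hs] := choice hstep.
pose fix ball (n : nat) : H * R := if n is n'.+1 then step (n', ball n') else (0, 1).
have hpos n : 0 < (ball n).2.
  by elim: n => [|n ih] /=; [exact: ltr01 | have [] := hs (n, ball n) ih].
have hrad n : (ball n).2 <= (2 ^+ n : R)^-1.
  elim: n => [|n ih] /=; first by rewrite expr0 invr1.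
  have [_ h _ _] := hs (n, ball n) (hpos n).
  apply: le_trans h _; rewrite exprS invfM [X in _ <= X]mulrC ler_pM2r // invr_gt0 //.
have hnest n m : (n <= m)%N -> hn ((ball m).1 - (ball n).1) + (ball m).2 <= (ball n).2.
  move=> /subnK <-; elim: (m - n)%N => [|j ih]; first by rewrite add0n subrr hnorm0 add0r.
  rewrite addSn /=; have [_ _ h _] := hs (j + n, ball (j + n))%N (hpos (j + n)%N).
  have := hnorm_distD (step (j + n, ball (j + n))%N).1 (ball (j + n)%N).1 (ball n).1; lra.
have hcauchy : cauchy (fun n => (ball n).1).
  move=> e e0; have [N hN] := invSn_lt_eventually e0; exists N.
  suff key p q : (N <= p)%N -> (p <= q)%N -> hn ((ball q).1 - (ball p).1) < e.
    move=> m n hm hn'; case: (leqP m n) => h; first by rewrite hnorm_distC; apply: key.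
    by apply: key => //; exact: ltnW.
  move=> hp hpq; have := hnest _ _ hpq; have := hpos q.
  have := le_trans (hrad p) (invr_exp2_le_invSn R p); have := hN p hp.
  set a := (p.+1%:R)^-1; set b := hn _; lra.
have [xs hxs] := cauchy_conv hcauchy.
exists xs => k Fk; have [_ _ _ hout] := hs (k, ball k) (hpos k).
apply: (hout xs) => //.
apply: (@conv_hnorm_le (fun n => (ball (n + k.+1)%N).1 - (ball k.+1).1) (xs - (ball k.+1).1)).
  move=> e e0; have [N hN] := hxs e e0; exists N => n Nn.
  by rewrite opprB addrA subrK; apply: hN; exact: leq_trans Nn (leq_addr _ _).
move=> n; have := hnest k.+1 (n + k.+1)%N (leq_addl _ _); have := hpos (n + k.+1)%N.
rewrite /=; lra.
Qed.

End Baire.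

Lemma baire (F : nat -> set H) : (forall k, hclosed (F k)) -> (forall x, exists k, F k x) ->
  exists k x0 (r : R), 0 < r /\ forall y, hn (y - x0) < r -> F k y.
Proof.
move=> cF cov; apply: contrapT => hno.
have [x hx] := @not_covered F cF (fun k x0 r r0 hb => hno (ex_intro _ k (ex_intro _ x0
  (ex_intro _ r (conj r0 hb))))).
by have [k] := cov x; apply: hx.
Qed.

Lemma weakly_bounded_bounded (V : set H) :
  (forall x, exists k : R, forall v, V v -> `|rip x v| <= k) ->
  exists C, forall v, V v -> hn v <= C.
Proof.
move=> hV.
pose F (k : nat) : set H := fun x => forall v, V v -> `|rip x v| <= k%:R.
have cF k : hclosed (F k).
  move=> x hx v Vv; apply: (@ler_of_small_eps _ _ _ (hn v)); first exact: hnorm_ge0.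
  move=> e e0 _; have [y Fy hy] := hx e e0.
  rewrite -[x](subrK y) ripDl addrC; apply: le_trans (ler_normD _ _) _.
  apply: lerD; first exact: Fy.
  apply: le_trans (normr_rip_le _ _) _; rewrite mulrC.
  by apply: ler_wpM2l; [exact: hnorm_ge0 | exact: ltW].
have cov x : exists k, F k x.
  have [k hk] := hV x; exists (Num.Def.archi_bound `|k|) => v Vv.
  apply: le_trans (hk v Vv) _; apply: le_trans (ler_norm k) _.
  exact: ltW (archi_boundP (normr_ge0 k)).
have [k [x0 [r [r0 hr]]]] := baire cF cov.
have Fx0 : F k x0 by apply: hr; rewrite subrr hnorm0.
exists (4 * k%:R / r) => v Vv.
case: (eqVneq (hn v) 0) => [->|hne]; first by rewrite !mulr_ge0 ?ler0n ?invr_ge0 ?ltW.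
have hpos := hnorm_gt0 hne.
pose t := r / (2 * hn v).
have t0 : 0 < t by rewrite divr_gt0 // mulr_gt0.
have hy : hn ((x0 + (t%:C)%C *: v) - x0) < r.
  have tv : t * hn v = r / 2 by rewrite /t; field; rewrite gt_eqF.
  by rewrite addrC addKr hnormZr gtr0_norm // tv; lra.
have h1 := hr _ hy v Vv; have h2 := Fx0 v Vv.
rewrite ripDl ripZl -hnorm_sqr in h1.
have h3 : t * hn v ^+ 2 <= 2 * k%:R.
  by move: h1 h2; rewrite !ler_norml => /andP[a1 a2] /andP[b1 b2]; lra.
have e2 : t * hn v ^+ 2 = r / 2 * hn v by rewrite /t; field; rewrite gt_eqF.
by rewrite e2 in h3; rewrite ler_pdivlMr //; lra.
Qed.

Lemma ip_orth_hclosure (E : set H) u : csubspace E -> (forall e, E e -> ip u e = 0) ->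
  forall y, hclosure ip E y -> ip u y = 0.
Proof.
move=> hE hu.
have hre y : hclosure ip E y -> rip u y = 0.
  move=> hy; apply/eqP; rewrite -normr_le0.
  apply: (@ler_of_small_eps _ _ _ (hn u)); first exact: hnorm_ge0.
  move=> e e0 _; have [z Ez hz] := hy e e0.
  rewrite -[y](subrK z) ripDr {2}/rip hu // addr0 add0r.
  apply: le_trans (normr_rip_le _ _) _.
  by apply: ler_wpM2l; [exact: hnorm_ge0 | exact: ltW].
move=> y hy; rewrite ip_rip !hre //.
have [_ hEc] := hclosure_csubspace hE.
by rewrite -[_ *: y]addr0; apply: hEc => //; apply: sub_hclosure; case: hE.
Qed.

Lemma hnorm_hom (r : R) x : 0 < r -> hn ((r%:C)%C *: x) = r * hn x.
Proof. by move=> r0; rewrite hnormZr gtr0_norm. Qed.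

Lemma opnorm_ub S x : bounded_op ip S -> hn x <= 1 -> hn (S x) <= opnorm ip S.
Proof.
case/bounded_opP => _ [M M0 hM] hx; apply: (@sup_ub _ _ M); last by exists x.
move=> _ [y hy <-]; apply: le_trans (hM y) _; exact: ler_piMr.
Qed.

Lemma hnorm_le_opnorm S x : bounded_op ip S -> hn (S x) <= opnorm ip S * hn x.
Proof.
move=> bS; have lS := bS.1.
apply: (@homogeneous_le (fun x => hn (S x)) hn) => [r y r0|r y r0|y|y /hnorm_eq0 ->|y hy].
- by rewrite linZ // hnorm_hom.
- exact: hnorm_hom.
- exact: hnorm_ge0.
- by rewrite lin0 // hnorm0.
- by apply: opnorm_ub; rewrite ?hy.
Qed.

Lemma opnorm_ge0 S : bounded_op ip S -> 0 <= opnorm ip S.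
Proof.
move=> bS; have := opnorm_ub bS (_ : hn 0 <= 1).
by rewrite lin0 ?hnorm0 ?ler01; [apply | exact: bS.1].
Qed.

Lemma opnorm_le S c : (forall x, hn x <= 1 -> hn (S x) <= c) -> opnorm ip S <= c.
Proof.
move=> hc; apply: sup_le => [|_ [x hx <-]]; last exact: hc.
by exists (hn (S 0)); exists 0 => //; rewrite /mkset hnorm0 ler01.
Qed.

(** * The operators T^diamond and (T^diamond)^diamond *)

Section Diamond.
Variables (A T : H -> H).
Hypothesis hA : positive_op ip A.
Hypothesis hT : in_BAhalf ip A T.

Local Notation S := (sqrt_op ip A).
Local Notation P := (projR ip A).
Local Notation KA := (hclosure ip (range A)).
Local Notation KS := (hclosure ip (range S)).
Local Notation Ts := (adj ip T).

Let lA : linop A := hA.1.1.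
Let pS : positive_op ip S := (sqrt_spec hA).1.
Let SS : forall x, S (S x) = A x := (sqrt_spec hA).2.
Let lS : linop S := pS.1.1.
Let sS : forall x y, ip (S x) y = ip x (S y) := pos_selfadj pS.
Let sA : forall x y, ip (A x) y = ip x (A y) := pos_selfadj hA.
Let hP := projR_spec lA.
Let bP : bounded_op ip P := hP.1.
Let lP : linop P := bP.1.
Let PK : forall x, KA (P x) := fun x => (hP.2 x).1.
Let Porth : forall x y, KA y -> ip (x - P x) y = 0 := fun x => (hP.2 x).2.
Let cKA : csubspace KA := hclosure_csubspace (range_csubspace lA).
Let bT : bounded_op ip T := hT.1.
Let lT : linop T := bT.1.
Let hTs := adj_spec bT.
Let lTs : linop Ts := hTs.1.1.
Let adjT : forall x y, ip (T x) y = ip x (Ts y) := hTs.2.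

Lemma KA0 : KA 0.
Proof. by case: cKA. Qed.

Lemma KA_lin a x y : KA x -> KA y -> KA (a *: x + y).
Proof. by case: cKA => _; apply. Qed.

Lemma KAB x y : KA x -> KA y -> KA (x - y).
Proof. by move=> hx hy; rewrite -scaleN1r addrC; apply: KA_lin. Qed.

Lemma KAZ a x : KA x -> KA (a *: x).
Proof. by move=> hx; rewrite -[_ *: x]addr0; apply: KA_lin => //; exact: KA0. Qed.

(* The component of S z orthogonal to KA lies in ker A = ker S, which is
   orthogonal to R(S). *)
Lemma KA_S z : KA (S z).
Proof.
pose n := S z - P (S z).
have An0 : A n = 0.
  apply: ip_injr => y; rewrite -sA ipC Porth ?conjc0 ?ip0r //.
  by apply: sub_hclosure; exists y.
have Sn0 : S n = 0 by apply: ripxx_eq0; rewrite /rip sS SS An0 ip0r.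
have n0 : n = 0.
  apply: ipxx_eq0; rewrite {1}/n ipBl sS Sn0 ip0r sub0r [ip (P _) n]ipC Porth //.
  by rewrite conjc0 oppr0.
by move/eqP: n0; rewrite subr_eq0 => /eqP ->.
Qed.

Lemma KA_KS y : KA y <-> KS y.
Proof.
split => hy.
  by apply: hclosure_mono hy => _ [x _ <-]; exists (S x) => //; rewrite SS.
by apply: (hclosure_min (@hclosure_closed _)) hy => _ [x _ <-]; exact: KA_S.
Qed.

Lemma SP x : S (P x) = S x.
Proof.
apply/eqP; rewrite eq_sym -subr_eq0 -(linB lS); apply/eqP.
by apply: ip_injl => z; rewrite sS Porth ?ip0l //; exact: KA_S.
Qed.

Lemma KA_S_eq0 u : KA u -> S u = 0 -> u = 0.
Proof.
move=> Ku Su; apply: ipxx_eq0.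
apply: (ip_orth_hclosure (range_csubspace lS)) => [_ [z _ <-]|]; last exact/KA_KS.
by rewrite -sS Su ip0l.
Qed.

Lemma P_eq_of_S x y : S x = S y -> P x = P y.
Proof.
move=> h; apply/eqP; rewrite -subr_eq0 -(linB lP); apply/eqP; apply: KA_S_eq0.
  exact: PK.
by rewrite SP (linB lS) h subrr.
Qed.

Lemma hnorm_P_le x : hn (P x) <= hn x.
Proof. by apply: hnorm_le_of_orth; rewrite /rip Porth. Qed.

Lemma ip_P_r u y : KA u -> ip u (P y) = ip u y.
Proof.
move=> Ku; apply/eqP; rewrite eq_sym -subr_eq0 -ipBr; apply/eqP.
by rewrite ipC Porth // conjc0.
Qed.

(* R(S) is dense in KA, so testing against S w suffices to bound u in KA. *)
Lemma hnorm_le_of_rip_S u c : KA u -> 0 <= c ->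
  (forall w, rip u (S w) <= c * hn (S w)) -> hn u <= c.
Proof.
move=> /KA_KS Ku c0 h; apply: ler_of_sqr_le_mul; rewrite ?hnorm_ge0 //.
apply: (@ler_of_small_eps _ _ _ (c + hn u)); first by rewrite addr_ge0 ?hnorm_ge0.
move=> e e0 _; have [_ [w _ <-] hw] := Ku e e0.
have h1 := h w; have h2 := rip_le u (u - S w).
have h3 : hn (S w) <= hn u + e.
  by have := hnorm_distD (S w) u 0; rewrite !subr0 hnorm_distC; lra.
have -> : hn u ^+ 2 = rip u (S w) + rip u (u - S w) by rewrite ripBr addrC subrK hnorm_sqr.
have : c * hn (S w) <= c * (hn u + e) by apply: ler_wpM2l.
have : hn u * hn (u - S w) <= hn u * e by apply: ler_wpM2l; [exact: hnorm_ge0 | exact: ltW].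
lra.
Qed.

Lemma rip_S_T x w (Y : H -> H) : Ts (S x) = S (Y x) -> rip x (S (T w)) = rip (S w) (Y x).
Proof. by move=> hY; rewrite /rip -sS [ip (S x) _]ipC ReJ adjT hY sS. Qed.

Lemma S_T_bound : exists2 C, 0 <= C & forall w, hn (S (T w)) <= C * hn (S w).
Proof.
have [Y hY] := choice hT.2.
pose V v := exists2 w, hn (S w) <= 1 & v = S (T w).
have [C hC] : exists C, forall v, V v -> hn v <= C.
  apply: weakly_bounded_bounded => x; exists (hn (Y x)) => _ [w hw ->].
  rewrite (rip_S_T _ (hY x)); apply: le_trans (normr_rip_le _ _) _.
  by rewrite ler_piMl ?hnorm_ge0.
exists (Num.max C 0); first by rewrite le_max lexx orbT.
apply: (@homogeneous_le (fun w => hn (S (T w))) (fun w => hn (S w))).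
- by move=> r w r0; rewrite linZ // linZ // hnorm_hom.
- by move=> r w r0; rewrite linZ // hnorm_hom.
- by move=> w; exact: hnorm_ge0.
- move=> w /hnorm_eq0 Sw0; suff -> : S (T w) = 0 by rewrite hnorm0.
  by apply: rip_eq0 => x; rewrite (rip_S_T _ (hY x)) Sw0 rip0l.
- move=> w hw; apply: le_trans (hC _ _) _; last by rewrite le_max lexx.
  by exists w; rewrite ?hw.
Qed.

Lemma diamond_exists : exists D, bounded_op ip D /\
  (forall x, Ts (S x) = S (D x)) /\ (forall x, KS (D x)).
Proof.
have [Y hY] := choice hT.2.
pose D x := P (Y x).
have SD x : S (D x) = Ts (S x) by rewrite /D SP hY.
have lD : linop D.
  move=> a x y; apply/eqP; rewrite -subr_eq0; apply/eqP; apply: KA_S_eq0.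
    by apply: KAB; [exact: PK | apply: KA_lin; exact: PK].
  by rewrite (linB lS) lS !SD lS lTs subrr.
have [C C0 hC] := S_T_bound.
exists D; split; last by split => x; [rewrite SD | apply/KA_KS; exact: PK].
split => //; exists C => x; rewrite mulrC; apply: hnorm_le_of_rip_S.
- exact: PK.
- by rewrite mulr_ge0 ?hnorm_ge0.
- move=> w; have -> : rip (D x) (S w) = rip x (S (T w)).
    by rewrite (rip_S_T _ (hY x)) ripC /rip /D (ip_P_r _ (KA_S w)).
  apply: le_trans (rip_le _ _) _; rewrite -mulrA.
  by apply: ler_wpM2l; [exact: hnorm_ge0 | exact: hC].
Qed.

Local Notation D := (diamond ip A T).

Lemma diamond_spec : bounded_op ip D /\
  (forall x, Ts (S x) = S (D x)) /\ (forall x, KS (D x)).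
Proof.
have [D0 hD0] := diamond_exists.
exact: (ClassicalEpsilon.epsilon_spec (inhabits T) (fun S' => bounded_op ip S' /\
    (forall x, adj ip T (sqrt_op ip A x) = sqrt_op ip A (S' x)) /\
    (forall x, hclosure ip (range (sqrt_op ip A)) (S' x))) (ex_intro _ D0 hD0)).
Qed.

Let bD : bounded_op ip D := diamond_spec.1.
Let SD : forall x, Ts (S x) = S (D x) := diamond_spec.2.1.
Let adjD : forall x y, ip (D x) y = ip x (adj ip D y) := (adj_spec bD).2.

Lemma adj_diamond_S x : adj ip D (S x) = S (T x).
Proof. by apply: ip_injr => z; rewrite -adjD -sS -SD ipC -adjT -ipC sS. Qed.

Local Notation E := (diamond ip A D).

(* D^* S = S T exhibits P T as D^diamond. *)
Lemma diamond_diamond_spec : bounded_op ip E /\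
  (forall x, adj ip D (S x) = S (E x)) /\ (forall x, KS (E x)).
Proof.
have hPT : bounded_op ip (fun x => P (T x)) /\
    (forall x, adj ip D (S x) = S (P (T x))) /\ (forall x, KS (P (T x))).
  split; last by split => x; [rewrite SP adj_diamond_S | apply/KA_KS; exact: PK].
  have [_ [M M0 hM]] := bounded_opP bT.
  split; first by move=> a x y; rewrite lT lP.
  by exists M => x; apply: le_trans (hnorm_P_le _) (hM x).
exact: (ClassicalEpsilon.epsilon_spec (inhabits D) (fun S' => bounded_op ip S' /\
    (forall x, adj ip D (sqrt_op ip A x) = sqrt_op ip A (S' x)) /\
    (forall x, hclosure ip (range (sqrt_op ip A)) (S' x))) (ex_intro _ _ hPT)).
Qed.

Lemma diamond_diamond_eq x : E x = P (T x).
Proof.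
have [_ [SE KE]] := diamond_diamond_spec.
apply/eqP; rewrite -subr_eq0; apply/eqP; apply: KA_S_eq0.
  by apply: KAB; [apply/KA_KS; exact: KE | exact: PK].
by rewrite (linB lS) -SE SP adj_diamond_S subrr.
Qed.

Lemma preimg_spec y : S (preimg ip A (S y)) = S y.
Proof.
exact: (ClassicalEpsilon.epsilon_spec (inhabits (S y)) (fun x => sqrt_op ip A x = S y)
  (ex_intro _ y erefl)).
Qed.

Lemma Rnorm_S y : Rnorm ip A (S y) = hn (P y).
Proof. by rewrite /Rnorm (P_eq_of_S (preimg_spec y)). Qed.

Lemma P_T_P x : P (T (P x)) = P (T x).
Proof. by apply: P_eq_of_S; rewrite -!adj_diamond_S SP. Qed.

Lemma Rnorm_Tb y : Rnorm ip A (Tb ip A T (S y)) = hn (P (T y)).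
Proof. by rewrite /Tb Rnorm_S -P_T_P (P_eq_of_S (preimg_spec y)) P_T_P. Qed.

Lemma Tb_norm_eq : Tb_norm ip A T = opnorm ip E.
Proof.
rewrite /Tb_norm /opnorm; congr sup; apply/seteqP; split => r /=.
  move=> [u [[y _ <-] hu] <-]; rewrite Rnorm_S in hu.
  by exists (P y) => //; rewrite diamond_diamond_eq Rnorm_Tb P_T_P.
move=> [x hx <-]; exists (S x); last by rewrite Rnorm_Tb diamond_diamond_eq.
by split; [exists x | rewrite Rnorm_S; apply: le_trans (hnorm_P_le x) hx].
Qed.

Lemma Anorm_S z : Anorm ip A z = hn (S z).
Proof. by rewrite /Anorm /hnorm -SS sS. Qed.

Lemma hnorm_Ts_S_le x : KA x -> hn (S x) = 1 -> hn (Ts (S x)) <= opnorm ip E.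
Proof.
have bE := diamond_diamond_spec.1.
move=> Kx Sx1; apply: ler_of_sqr_le_mul; [exact: hnorm_ge0 | exact: opnorm_ge0 |].
rewrite hnorm_sqr {1}/rip ipC -adjT -ipC -(ip_P_r _ (KA_S x)) -diamond_diamond_eq.
apply: le_trans (rip_le _ _) _; rewrite Sx1 mul1r.
exact: hnorm_le_opnorm.
Qed.

Lemma Aopnorm_ub x : KA x -> hn (S x) = 1 -> hn (Ts (S x)) <= Aopnorm ip A D.
Proof.
move=> Kx Sx1; rewrite SD -Anorm_S; apply: (@sup_ub _ _ (opnorm ip E)).
  by move=> _ [y [Ky Sy1] <-]; rewrite Anorm_S -SD; apply: hnorm_Ts_S_le; rewrite -?Anorm_S.
by exists x => //; split; rewrite ?Anorm_S.
Qed.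

Lemma hnorm_Ts_S_le_Aopnorm w : hn (Ts (S w)) <= Aopnorm ip A D * hn (S w).
Proof.
apply: (@homogeneous_le (fun w => hn (Ts (S w))) (fun w => hn (S w))).
- by move=> r y r0; rewrite linZ // linZ // hnorm_hom.
- by move=> r y r0; rewrite linZ // hnorm_hom.
- by move=> y; exact: hnorm_ge0.
- by move=> y /hnorm_eq0 ->; rewrite lin0 // hnorm0.
- by move=> y Sy1; rewrite -SP; apply: Aopnorm_ub; rewrite ?SP.
Qed.

Hypothesis hA0 : exists x : H, A x <> 0.

Lemma exists_KA_unit : exists x, KA x /\ hn (S x) = 1.
Proof.
have [x1 hx1] := hA0; pose w := S x1.
have hpos : 0 < hn (S w) by rewrite hnorm_gt0 //; apply/eqP => /hnorm_eq0; rewrite /w SS.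
exists ((((hn (S w))^-1)%:C)%C *: P w); split; first by apply: KAZ; exact: PK.
by rewrite (linZ lS) SP hnorm_hom ?invr_gt0 // mulVf // gt_eqF.
Qed.

Lemma Aopnorm_ge0 : 0 <= Aopnorm ip A D.
Proof.
by have [x [Kx Sx1]] := exists_KA_unit; apply: le_trans (Aopnorm_ub Kx Sx1); exact: hnorm_ge0.
Qed.

Lemma Aopnorm_le_opnorm : Aopnorm ip A D <= opnorm ip E.
Proof.
apply: sup_le => [|_ [x [Kx Sx1] <-]].
  have [x [Kx Sx1]] := exists_KA_unit.
  by exists (Anorm ip A (D x)); exists x => //; split; rewrite ?Anorm_S.
by rewrite Anorm_S -SD; apply: hnorm_Ts_S_le; rewrite -?Anorm_S.
Qed.

(* Duality: Re <P T x, S w> = Re <x, T^* S w>. *)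
Lemma opnorm_le_Aopnorm : opnorm ip E <= Aopnorm ip A D.
Proof.
apply: opnorm_le => x hx; rewrite diamond_diamond_eq.
apply: hnorm_le_of_rip_S; [exact: PK | exact: Aopnorm_ge0 |] => w.
rewrite ripC /rip (ip_P_r _ (KA_S w)) ipC ReJ adjT -/(rip _ _).
apply: le_trans (rip_le _ _) (le_trans _ (hnorm_Ts_S_le_Aopnorm w)).
by rewrite ler_piMl ?hnorm_ge0.
Qed.

End Diamond.

End Hilbert.

Theorem mainTheorem5 (R : realType) (H : lmodType R[i]) (ip : H -> H -> R[i])
  (hH : is_hilbert ip) (A T : H -> H)
  (hA : positive_op ip A) (hA0 : exists x : H, A x <> 0)
  (hT : in_BAhalf ip A T) :
  Tb_norm ip A T = opnorm ip (diamond ip A (diamond ip A T)) /\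
  opnorm ip (diamond ip A (diamond ip A T)) = Aopnorm ip A (diamond ip A T).
Proof.
split; first exact: Tb_norm_eq.
by apply/le_anti; rewrite opnorm_le_Aopnorm ?Aopnorm_le_opnorm.
Qed.
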